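(* Let $\rho$ be a positive semidefinite matrix on $\mathbb{C}^M\otimes\mathbb{C}^N$ of rank $r$, with spectral-type decomposition $\rho=\sum_{l=1}^r|\Psi_l\rangle\langle\Psi_l|$ ($|\Psi_l\rangle=\sqrt{\lambda_l}|\psi_l\rangle$, $\lambda_l>0$ the eigenvalues, $|\psi_l\rangle$ orthonormal eigenvectors), and let $\rho=\sum_{k=1}^K|\Phi_k\rangle\langle\Phi_k|$ be another decomposition into $K\ge r$ rank-one terms. Let $w_{mn}\in\mathbb{C}^r$ and $w'_{mn}\in\mathbb{C}^K$ ($m=1,\dots,M$, $n=1,\dots,N$) be the corresponding Gram vectors, $w_{mn}^l=\langle\Psi_l|e_m\otimes f_n\rangle$, $w'^{\,k}_{mn}=\langle\Phi_k|e_m\otimes f_n\rangle$. Suppose $v_1,\dots,v_N\in\mathbb{C}^r$ are linearly independent and $F_1,\dots,F_M:\mathbb{C}^r\to\mathbb{C}^r$ are linear maps with $w_{mn}=F_mv_n$ for all $m,n$, and suppose $v'_1,\dots,v'_N\in\mathbb{C}^K$ are linearly independent and $F'_1,\dots,F'_M:\mathbb{C}^K\to\mathbb{C}^K$ are linear maps with $w'_{mn}=F'_mv'_n$ for all $m,n$. Then there exist $K\times r$ matrices $V$ and $\tilde V$, with $V^\dagger V=I_r$ and $\tilde V$ of rank $r$, such that $V^\dagger F'_m\tilde V v=F_m v$ for every $m=1,\dots,M$ and every $v\in\operatorname{span}\{v_1,\dots,v_N\}$.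
   Context: $\{|e_m\rangle\}_{m=1}^M$ and $\{|f_n\rangle\}_{n=1}^N$ are fixed orthonormal bases of $\mathbb{C}^M$ and $\mathbb{C}^N$. The scalar product on $\mathbb{C}^K$ is $\langle u,v\rangle=\sum_l\overline{u^l}v^l$. A family of vectors $\{w_{mn}\}\subset\mathbb{C}^K$ is a Gram system for $\rho$ if $\rho_{ij,mn}:=\langle e_i\otimes f_j|\rho|e_m\otimes f_n\rangle=\langle w_{ij},w_{mn}\rangle$ for all $i,j,m,n$; the vectors defined in the claim are Gram systems for $\rho$. *)

From HB Require Import structures.
From mathcomp Require Import all_boot all_order all_algebra.
Set Implicit Arguments. Unset Strict Implicit. Unset Printing Implicit Defensive.
Import Order.TTheory GRing.Theory Num.Theory.
Local Open Scope ring_scope.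

(* Complex scalars: an arbitrary numClosedFieldType C (algebraically closed
   field with conjugation and order on reals), e.g. algC. *)

Definition hadj (C : numClosedFieldType) m n (A : 'M[C]_(m, n)) : 'M[C]_(n, m) :=
  (map_mx Num.conj A)^T.

Definition psd (C : numClosedFieldType) d (A : 'M[C]_d) : Prop :=
  hadj A = A /\ forall x : 'cV[C]_d, 0 <= (hadj x *m A *m x) 0 0.

(* Standard basis vector e_m (x) f_n of C^M (x) C^N = C^(M*N); the tensor
   index (m,n) is encoded by mathcomp's mxvec_index. *)
Definition ebasis (C : numClosedFieldType) M N (m : 'I_M) (n : 'I_N) : 'cV[C]_(M * N) :=
  delta_mx (mxvec_index m n) 0.

Definition gram_vec (C : numClosedFieldType) M N r (Psi : 'I_r -> 'cV[C]_(M * N))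
  (m : 'I_M) (n : 'I_N) : 'cV[C]_r :=
  \col_(l < r) (hadj (Psi l) *m ebasis C m n) 0 0.

From HB Require Import structures.
From mathcomp Require Import all_boot all_order all_algebra.
Set Implicit Arguments. Unset Strict Implicit. Unset Printing Implicit Defensive.
Import Order.TTheory GRing.Theory Num.Theory.
Local Open Scope ring_scope.

(* Collect the vectors of the two decompositions as the columns of
   P = [Psi_1 .. Psi_r] (an MN x r matrix) and Q = [Phi_1 .. Phi_K], so that
   rho = P P^+ = Q Q^+ and the Gram vectors are w_mn = P^+ (e_m (x) f_n),
   w'_mn = Q^+ (e_m (x) f_n).  Since the Psi_l are orthogonal and nonzero,
   D = P^+ P is invertible, and V = Q^+ P D^-1 is a K x r isometry
   (V^+ V = 1) with Q^+ = V P^+; hence w'_mn = V w_mn, i.e.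
   F'_m v'_n = V F_m v_n for all m, n.
   On the other side, the rows v_n^T and v'_n^T form row-free matrices A and A'
   with N <= r <= K; a rank-completion argument gives an r x K matrix W of full
   rank r with A W = A', i.e. v'_n = W^T v_n.  Then for x = sum_n y_n v_n we get
   V^+ F'_m W^T x = V^+ F'_m sum_n y_n v'_n = V^+ V F_m x = F_m x, so
   V and Vt = W^T witness the theorem. *)

Section Adjoint.
Variable C : numClosedFieldType.

Lemma hadjM m n p (A : 'M[C]_(m, n)) (B : 'M[C]_(n, p)) :
  hadj (A *m B) = hadj B *m hadj A.
Proof. by rewrite /hadj map_mxM trmx_mul. Qed.

Lemma hadjK m n (A : 'M[C]_(m, n)) : hadj (hadj A) = A.
Proof. by apply/matrixP=> i j; rewrite !mxE conjCK. Qed.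

Lemma hadj1 n : hadj (1%:M : 'M[C]_n) = 1%:M.
Proof. by apply/matrixP=> i j; rewrite !mxE eq_sym rmorph_nat. Qed.

Lemma hadjZ m n c (A : 'M[C]_(m, n)) : hadj (c *: A) = c^* *: hadj A.
Proof. by apply/matrixP=> i j; rewrite !mxE rmorphM. Qed.

(* Definiteness of the Frobenius form: the diagonal entries of E^+ E are the
   squared norms of the columns of E. *)
Lemma hadj_mul_eq0 m n (E : 'M[C]_(m, n)) : hadj E *m E = 0 -> E = 0.
Proof.
move=> EE0; apply/matrixP=> i j; have := congr1 (fun X : 'M[C]_n => X j j) EE0.
rewrite !mxE => /eqP; rewrite psumr_eq0 => [/allP colj0|k _].
  have := colj0 i (mem_index_enum _); rewrite !mxE implyTb mulrC -normCK.
  by rewrite sqrf_eq0 normr_eq0 => /eqP.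
by rewrite !mxE mulrC -normCK exprn_ge0.
Qed.
End Adjoint.

Section ColumnFamilies.
Variable C : numClosedFieldType.

Definition colsmx p k (X : 'I_k -> 'cV[C]_p) : 'M[C]_(p, k) :=
  \matrix_(i, l) X l i 0.

Lemma eq_colsmx p k (X Y : 'I_k -> 'cV[C]_p) :
  (forall l, X l = Y l) -> colsmx X = colsmx Y.
Proof. by move=> eqXY; apply/matrixP=> i l; rewrite !mxE eqXY. Qed.

Lemma colsmxM p p' k (B : 'M[C]_(p', p)) (X : 'I_k -> 'cV[C]_p) :
  colsmx (fun l => B *m X l) = B *m colsmx X.
Proof. by apply/matrixP=> i l; rewrite !mxE; apply: eq_bigr => j _; rewrite !mxE. Qed.

Lemma colsmx_tr p k (X : 'I_k -> 'cV[C]_p) : colsmx X = (\matrix_l (X l)^T)^T.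
Proof. by apply/matrixP=> i l; rewrite !mxE. Qed.

Lemma sum_outer_colsmx p k (X : 'I_k -> 'cV[C]_p) :
  \sum_l X l *m hadj (X l) = colsmx X *m hadj (colsmx X).
Proof.
apply/matrixP=> i j; rewrite summxE !mxE; apply: eq_bigr => l _.
by rewrite !mxE big_ord1 !mxE.
Qed.

Lemma gram_colsmxE p k (X : 'I_k -> 'cV[C]_p) i j :
  (hadj (colsmx X) *m colsmx X) i j = (hadj (X i) *m X j) 0 0.
Proof. by rewrite !mxE; apply: eq_bigr => a _; rewrite !mxE. Qed.

Lemma gram_vec_colsmx M N k (X : 'I_k -> 'cV[C]_(M * N)) m n :
  gram_vec X m n = hadj (colsmx X) *m ebasis C m n.
Proof.
apply/matrixP=> l z; rewrite (ord1 z) !mxE; apply: eq_bigr => i _; rewrite !mxE //.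
Qed.

(* A family X_l = c_l psi_l with psi orthonormal and every c_l nonzero has an
   invertible Gram matrix, namely diag(|c_l|^2). *)
Lemma gram_scaled_orthonormal_unit p k (psi X : 'I_k -> 'cV[C]_p) (c : 'I_k -> C) :
  (forall l l', hadj (psi l) *m psi l' = (l == l')%:R%:M) ->
  (forall l, c l != 0) -> (forall l, X l = c l *: psi l) ->
  hadj (colsmx X) *m colsmx X \in unitmx.
Proof.
move=> orth c_neq0 defX.
have -> : hadj (colsmx X) *m colsmx X = diag_mx (\row_l ((c l)^* * c l)).
  apply/matrixP=> i j; rewrite gram_colsmxE !defX hadjZ -scalemxAl -scalemxAr orth.
  rewrite !mxE eqxx mulr1n; case: eqP => [->|_]; first by rewrite mulr1n mulr1.
  by rewrite !mulr0n !mulr0.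
rewrite unitmxE det_diag unitfE; apply/prodf_neq0 => l _.
by rewrite mxE mulf_neq0 ?conjC_eq0.
Qed.
End ColumnFamilies.

Section LinkingIsometry.
Variables (C : numClosedFieldType) (p r K : nat).
Variables (P : 'M[C]_(p, r)) (Q : 'M[C]_(p, K)).
Hypothesis same_outer : P *m hadj P = Q *m hadj Q.
Hypothesis gramP_unit : hadj P *m P \in unitmx.

Definition link : 'M[C]_(K, r) := hadj Q *m P *m invmx (hadj P *m P).

(* Q^+ factors through P^+: the projection Pi onto the orthocomplement of the
   range of P kills Q^+ because (Q^+ Pi)^+ (Q^+ Pi) = Pi^+ P P^+ Pi = 0. *)
Lemma link_factor : hadj Q = link *m hadj P.
Proof.
pose Pi := 1%:M - P *m invmx (hadj P *m P) *m hadj P.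
have defE : hadj Q *m Pi = hadj Q - link *m hadj P.
  by rewrite /Pi mulmxBr mulmx1 /link !mulmxA.
have P_annihilates : hadj P *m Pi = 0.
  by rewrite mulmxBr mulmx1 !mulmxA (mulmxV gramP_unit) mul1mx subrr.
apply/eqP; rewrite -subr_eq0 -defE; apply/eqP/hadj_mul_eq0.
rewrite hadjM hadjK mulmxA -(mulmxA _ Q) -same_outer -mulmxA -(mulmxA P).
by rewrite P_annihilates !mulmx0.
Qed.

(* link is an isometry: with D = P^+ P (self-adjoint),
   link^+ link = (D^-1)^+ P^+ Q Q^+ P D^-1 = (D^-1)^+ D D D^-1 = (D D^-1)^+ = 1. *)
Lemma link_isometry : hadj link *m link = 1%:M.
Proof.
have selfadj : hadj (hadj P *m P) = hadj P *m P by rewrite hadjM hadjK.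
rewrite /link !hadjM !hadjK !mulmxA -(mulmxA _ Q) -same_outer.
rewrite -!mulmxA (mulmxA (hadj P) P) (mulmxA (hadj P) P) (mulmxV gramP_unit).
by rewrite mulmx1 -{2}selfadj -hadjM (mulmxV gramP_unit) hadj1.
Qed.
End LinkingIsometry.

Section RankCompletion.

Variable R : fieldType.

(* An invertible N x N block G extends to an invertible r x r matrix Y acting
   on the first N coordinates as G does: Y = [[G, 0], [0, 1]], written with
   partial identities to avoid casting r = N + (r - N). *)
Lemma pid_block_extension N r (G : 'M[R]_N) : (N <= r)%N -> G \in unitmx ->
  exists2 Y : 'M[R]_r, Y \in unitmx & (pid_mx N : 'M_(N, r)) *m Y = G *m pid_mx N.
Proof.
move=> le_Nr uG.
pose e : 'M[R]_(r, N) := pid_mx N; pose f : 'M[R]_(N, r) := pid_mx N.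
have fe : f *m e = 1%:M by rewrite mul_pid_mx minnn (minn_idPr le_Nr) pid_mx_1.
have ef : e *m f = pid_mx N by rewrite mul_pid_mx !minnn.
have fc : f *m copid_mx N = 0 by rewrite mul_pid_mx_copid.
have ce : copid_mx N *m e = 0 by rewrite mul_copid_mx_pid.
pose Y := e *m G *m f + copid_mx N; pose Yi := e *m invmx G *m f + copid_mx N.
have YYi : Y *m Yi = 1%:M.
  rewrite mulmxDl [_ *m Yi]mulmxDr [copid_mx N *m Yi]mulmxDr copid_mx_id //.
  rewrite -!mulmxA (mulmxA f e) fe mul1mx (mulmxA G) (mulmxV uG) mul1mx mulmxA.
  by rewrite ef fc (mulmxA (copid_mx N)) ce !mul0mx mulmx0 addr0 add0r subrKC.
exists Y; first by case: (mulmx1_unit YYi).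
by rewrite mulmxDr fc addr0 !mulmxA fe mul1mx.
Qed.

(* Both matrices are put in
   the normal form L [1_N 0] U of Gaussian elimination, which reduces the
   problem to pid_block_extension. *)
Lemma exists_full_rank_solution N r K (A : 'M[R]_(N, r)) (A' : 'M[R]_(N, K)) :
  row_free A -> row_free A' -> (r <= K)%N ->
  exists2 W : 'M[R]_(r, K), A *m W = A' & \rank W = r.
Proof.
move=> freeA freeA' le_rK.
have le_Nr : (N <= r)%N by rewrite -(eqP freeA) rank_leq_col.
have defA := mulmx_ebase A; have defA' := mulmx_ebase A'.
rewrite (eqP freeA) in defA; rewrite (eqP freeA') in defA'.
have uU := row_ebase_unit A; have uL := col_ebase_unit A.
set L := col_ebase A in defA uL; set U := row_ebase A in defA uU.
set L' := col_ebase A' in defA'; set U' := row_ebase A' in defA'.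
have [Y uY pidY] : exists2 Y : 'M[R]_r, Y \in unitmx &
    (pid_mx N : 'M_(N, r)) *m Y = (invmx L *m L') *m pid_mx N.
  by apply: pid_block_extension; rewrite // unitmx_mul unitmx_inv uL col_ebase_unit.
exists (invmx U *m Y *m pid_mx r *m U').
  rewrite -defA -defA' !mulmxA (mulmxK uU) -(mulmxA L) pidY -!mulmxA (mulKVmx uL).
  by rewrite (mulmxA (pid_mx N)) mul_pid_mx (minn_idPl le_Nr) (minn_idPr le_Nr).
rewrite mxrankMfree ?row_free_unit ?row_ebase_unit // -!mulmxA.
rewrite (eqmxMfull _ (_ : row_full (invmx U))) ?row_full_unit ?unitmx_inv //.
by rewrite (eqmxMfull _ (_ : row_full Y)) ?row_full_unit // rank_pid_mx.
Qed.
End RankCompletion.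

Section Intertwining.
Variables (C : numClosedFieldType) (N r K : nat).

Lemma intertwine_on_span (A : 'M[C]_(N, r)) (A' : 'M[C]_(N, K)) (W : 'M[C]_(r, K))
    (V : 'M[C]_(K, r)) (F : 'M[C]_r) (F' : 'M[C]_K) (x : 'cV[C]_r) :
  A *m W = A' -> hadj V *m V = 1%:M -> F' *m A'^T = V *m (F *m A^T) ->
  (x^T <= A)%MS -> hadj V *m F' *m W^T *m x = F *m x.
Proof.
move=> AW isoV intertw /submxP [y defx].
have -> : x = A^T *m y^T by rewrite -trmx_mul -defx trmxK.
rewrite !mulmxA -(mulmxA _ W^T) -trmx_mul AW -(mulmxA (hadj V)) intertw.
by rewrite (mulmxA (hadj V)) isoV mul1mx.
Qed.
End Intertwining.

Theorem theorem1 (C : numClosedFieldType) (M N r K : nat)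
  (rho : 'M[C]_(M * N))
  (lam : 'I_r -> C) (psi Psi : 'I_r -> 'cV[C]_(M * N))
  (Phi : 'I_K -> 'cV[C]_(M * N))
  (v : 'I_N -> 'cV[C]_r) (F : 'I_M -> 'M[C]_r)
  (v' : 'I_N -> 'cV[C]_K) (F' : 'I_M -> 'M[C]_K) :
  psd rho ->
  \rank rho = r ->
  (forall l, 0 < lam l) ->
  (forall l l', hadj (psi l) *m psi l' = (l == l')%:R%:M) ->
  (forall l, rho *m psi l = lam l *: psi l) ->
  (forall l, Psi l = sqrtC (lam l) *: psi l) ->
  rho = \sum_(l < r) Psi l *m hadj (Psi l) ->
  (r <= K)%N ->
  rho = \sum_(k < K) Phi k *m hadj (Phi k) ->
  row_free (\matrix_(n < N) (v n)^T) ->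
  (forall m n, gram_vec Psi m n = F m *m v n) ->
  row_free (\matrix_(n < N) (v' n)^T) ->
  (forall m n, gram_vec Phi m n = F' m *m v' n) ->
  exists V Vt : 'M[C]_(K, r),
    [/\ hadj V *m V = 1%:M, \rank Vt = r &
      forall (m : 'I_M) (x : 'cV[C]_r),
        (x^T <= \matrix_(n < N) (v n)^T)%MS ->
        hadj V *m F' m *m Vt *m x = F m *m x].
Proof.
move=> _ _ lam_gt0 orth _ defPsi rhoP le_rK rhoQ freeA gramP freeA' gramQ.
rewrite sum_outer_colsmx in rhoP; rewrite sum_outer_colsmx in rhoQ.
have same_outer := etrans (esym rhoP) rhoQ.
have gramP_unit : hadj (colsmx Psi) *m colsmx Psi \in unitmx.
  apply: gram_scaled_orthonormal_unit orth _ defPsi => l.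
  by rewrite sqrtC_eq0 lt0r_neq0.
have isoV := link_isometry same_outer gramP_unit.
have [W AW rankW] := exists_full_rank_solution freeA freeA' le_rK.
exists (link (colsmx Psi) (colsmx Phi)), W^T; split=> //; first by rewrite mxrank_tr.
move=> m x; apply: intertwine_on_span AW isoV _.
rewrite -!colsmx_tr -!colsmxM; apply: eq_colsmx => n.
by rewrite -gramQ -gramP !gram_vec_colsmx (link_factor same_outer gramP_unit) mulmxA.
Qed.
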